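(* Let $F$ be a field of characteristic $\neq 2$ and let $O$ be a Cayley algebra over $F$ which is a division algebra (i.e. has no zero divisors). Let $V=\operatorname{im}(O)$ and let $$\mathfrak{B}=\{\operatorname{im}(H)\colon H \text{ is a 4-dimensional associative subalgebra of } O\}.$$ Then $\dim V=7$, $\dim B=3$ for every $B\in\mathfrak{B}$, and every two-dimensional subspace $U\subseteq V$ is contained in exactly one element $B\in\mathfrak{B}$. In particular $(V,\mathfrak{B})$ is a $2$-$(7,3,1)$ subspace design ($q$-Fano plane) over $F$.
   Context: All algebras are finite-dimensional $F$-vector spaces with a bilinear (not necessarily associative) multiplication and a unit $1$; subalgebras contain $1$. An involution of an algebra $A$ is a linear map $a\mapsto a^*$ with $(ab)^*=b^*a^*$ and $(a^* )^*=a$. Cayley–Dickson algebras are defined inductively: $F$ with the identity involution is one; if $A$ is a Cayley–Dickson algebra with involution $*$ and $\gamma\in F^\times$, the Dickson double $D_\gamma(A)$ is the vector space $A\oplus A$, whose elements are written $a+ib$ ($a,b\in A$), with multiplication $(a+ib)(c+id)=(ac+\gamma\, d b^* )+i(a^*d+cb)$ and involution $(a+ib)^*=a^*-ib$; it is again a Cayley–Dickson algebra. A Cayley algebra is an 8-dimensional Cayley–Dickson algebra, i.e. $D_\gamma(D_\beta(D_\alpha(F)))$ with $\alpha,\beta,\gamma\in F^\times$. For a Cayley–Dickson algebra (or a subalgebra $H$ of one), $\operatorname{im}(H)=\{a\in H: a^*=-a\}$ (the imaginary elements); one has $O=F1\oplus\operatorname{im}(O)$. A $2$-$(v,k,1)$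 subspace design on a $v$-dimensional space $V$ is a set of $k$-dimensional subspaces such that every 2-dimensional subspace of $V$ lies in exactly one of them. *)

From HB Require Import structures.
From mathcomp Require Import all_boot all_order all_algebra.
Set Implicit Arguments. Unset Strict Implicit. Unset Printing Implicit Defensive.
Import GRing.Theory.
Local Open Scope ring_scope.

(* Cayley--Dickson construction.  An element a + i b of the Dickson double
   D_g(A) is represented by the pair (a, b) : A * A. *)
Section CayleyDickson.
Variable F : fieldType.

(* (a+ib)(c+id) = (ac + g d b^* ) + i (a^* d + c b) *)
Definition dmul (A : lmodType F) (mulA : A -> A -> A) (cjA : A -> A) (g : F)
    (x y : A * A) : A * A :=
  (mulA x.1 y.1 + g *: mulA y.2 (cjA x.2), mulA (cjA x.1) y.2 + mulA y.1 x.2).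
Definition dconj (A : lmodType F) (cjA : A -> A) (x : A * A) : A * A :=
  (cjA x.1, - x.2).
Definition done_ (A : lmodType F) (oneA : A) : A * A := (oneA, 0).

Definition C0 := (F^o : vectType F).
Definition C1 := (C0 * C0)%type.
Definition C2 := (C1 * C1)%type.
(* the Cayley algebra O = D_gamma(D_beta(D_alpha(F))) as an F-vector space *)
Definition Cayley := (C2 * C2)%type.

Definition mul0 (x y : C0) : C0 := (x : F) * y.
Definition conj0 (x : C0) : C0 := x.
Definition one0 : C0 := (1 : F).

Variables alpha beta gamma : F.

Definition mul1 : C1 -> C1 -> C1 := @dmul C0 mul0 conj0 alpha.
Definition conj1 : C1 -> C1 := @dconj C0 conj0.
Definition one1 : C1 := @done_ C0 one0.
Definition mul2 : C2 -> C2 -> C2 := @dmul C1 mul1 conj1 beta.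
Definition conj2 : C2 -> C2 := @dconj C1 conj1.
Definition one2 : C2 := @done_ C1 one1.

Definition omul : Cayley -> Cayley -> Cayley := @dmul C2 mul2 conj2 gamma.
Definition oconj : Cayley -> Cayley := @dconj C2 conj2.
Definition oone : Cayley := @done_ C2 one2.

Definition cayley_division : Prop :=
  forall x y : Cayley, omul x y = 0 -> x = 0 \/ y = 0.

Definition is_subalgebra (H : {vspace Cayley}) : Prop :=
  oone \in H /\ (forall x y, x \in H -> y \in H -> omul x y \in H).

Definition is_assoc (H : {vspace Cayley}) : Prop :=
  forall x y z, x \in H -> y \in H -> z \in H ->
    omul (omul x y) z = omul x (omul y z).

Definition is_im (H B : {vspace Cayley}) : Prop :=
  forall v, (v \in B) = (v \in H) && (oconj v == - v).

Definition in_frakB (B : {vspace Cayley}) : Prop :=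
  exists H : {vspace Cayley},
    [/\ is_subalgebra H, is_assoc H, \dim H = 4%N & is_im H B].

End CayleyDickson.

From HB Require Import structures.
From mathcomp Require Import all_boot all_order all_algebra.
From mathcomp Require Import ring.
Import GRing.Theory.
Local Open Scope ring_scope.
Set Implicit Arguments. Unset Strict Implicit. Unset Printing Implicit Defensive.

(* Let O be the Cayley algebra D_gamma(D_beta(D_alpha(F))), with product
   om, real part re (the coordinate of 1) and V = im(O) = ker re.

   Writing elements of O with their eight coordinates, the
      few polynomial identities we need are checked by the ring tactic:
      bilinearity and unit laws, left and right alternativity, the identity
      (u, v, uv) = 0 for the associator, the quadratic equation satisfied by
      every element, and the formula x^* = 2 re(x) - x for the involution.
   2. Alternative algebra.  From these, the associator is trilinear and
      alternating, and for imaginary u, v the multiplication table of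
      1, u, v, uv closes up; hence H(u, v) = span(1, u, v, uv) is an
      associative subalgebra.
   3. Division.  If O has no zero divisors and u, v are independent
      imaginary elements, then 1, u, v, uv are independent, so dim H = 4.
   4. The design.  dim V = 7; a 4-dimensional subalgebra H contains 1, which
      is not in V, so dim im(H) = dim (H :&: V) = 3; a 2-dimensional U = <u, v>
      of V lies in im(H(u, v)), and any 4-dimensional subalgebra H with
      U <= im(H) contains 1, u, v, uv, hence equals H(u, v). *)

Lemma span_map_sub (K : fieldType) (vT : vectType K) (f : vT -> vT)
    (W : {vspace vT}) (X : seq vT) :
  (forall x y, f (x + y) = f x + f y) -> (forall k x, f (k *: x) = k *: f x) ->
  {in X, forall e, f e \in W} -> {in <<X>>%VS, forall x, f x \in W}.
Proof.
move=> fD fZ; elim: X => [|e X IH] fX x.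
  by rewrite span_nil memv0 => /eqP->; rewrite -(scale0r 0) fZ scale0r mem0v.
rewrite span_cons => /memv_addP[_ /vlineP[k ->] [y yX ->]].
rewrite fD fZ; apply: memvD; first by rewrite memvZ ?fX ?mem_head.
by apply: (IH _ y yX) => e' Xe'; rewrite fX // inE Xe' orbT.
Qed.

Lemma dim2_basis (K : fieldType) (vT : vectType K) (U : {vspace vT}) :
  \dim U = 2%N -> exists v u, U = <<[:: v; u]>>%VS /\ free [:: v; u].
Proof.
move=> dU; move: (vbasisP U); case: (vbasis U) => s /= /eqP; rewrite dU.
by case: s => [|v [|u [|? ?]]] // _ bU; exists v, u; rewrite (span_basis bU) (basis_free bU).
Qed.

Section Coordinates.
Variables (F : fieldType) (alpha beta gamma : F).
Local Notation O := (Cayley F).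
Local Notation om := (omul alpha beta gamma).
Local Notation one := (oone F).

(* An octonion from its eight coordinates; locked so that terms stay small. *)
Definition mk_def (a0 a1 a2 a3 a4 a5 a6 a7 : F) : O :=
  (((a0, a1), (a2, a3)), ((a4, a5), (a6, a7))).
Definition mk := locked mk_def.
Lemma mkE : mk = mk_def. Proof. by rewrite /mk -lock. Qed.

Lemma mkK (x : O) :
  x = mk x.1.1.1 x.1.1.2 x.1.2.1 x.1.2.2 x.2.1.1 x.2.1.2 x.2.2.1 x.2.2.2.
Proof. by rewrite mkE; case: x => [[[? ?] [? ?]] [[? ?] [? ?]]]. Qed.

Lemma mk_eq a0 a1 a2 a3 a4 a5 a6 a7 b0 b1 b2 b3 b4 b5 b6 b7 :
  a0 = b0 -> a1 = b1 -> a2 = b2 -> a3 = b3 ->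
  a4 = b4 -> a5 = b5 -> a6 = b6 -> a7 = b7 ->
  mk a0 a1 a2 a3 a4 a5 a6 a7 = mk b0 b1 b2 b3 b4 b5 b6 b7.
Proof. by move=> -> -> -> -> -> -> -> ->. Qed.

(* The operations of O in coordinates, obtained by unfolding the three
   Dickson doublings. *)
Lemma omulE a0 a1 a2 a3 a4 a5 a6 a7 b0 b1 b2 b3 b4 b5 b6 b7 :
  om (mk a0 a1 a2 a3 a4 a5 a6 a7) (mk b0 b1 b2 b3 b4 b5 b6 b7) =
  mk (a0 * b0 + alpha * (b1 * a1) + beta * (b2 * a2 + alpha * (- a3 * b3)) + gamma * (b4 * a4 + alpha * (- a5 * b5) + beta * (- a6 * b6 + alpha * (- b7 * - a7))))
   (a0 * b1 + b0 * a1 + beta * (b2 * - a3 + a2 * b3) + gamma * (b4 * - a5 + a4 * b5 + beta * (- a6 * - b7 + b6 * - a7)))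
   (a0 * b2 + alpha * (b3 * - a1) + (b0 * a2 + alpha * (a3 * b1)) + gamma * (b4 * - a6 + alpha * (- a7 * - b5) + (a4 * b6 + alpha * (b7 * - a5))))
   (a0 * b3 + b2 * - a1 + (b0 * a3 + a2 * b1) + gamma * (b4 * - a7 + - a6 * - b5 + (a4 * b7 + b6 * - a5)))
   (a0 * b4 + alpha * (b5 * - a1) + beta * (b6 * - a2 + alpha * (- - a3 * b7)) + (b0 * a4 + alpha * (a5 * b1) + beta * (a6 * b2 + alpha * (- b3 * a7))))
   (a0 * b5 + b4 * - a1 + beta * (b6 * - - a3 + - a2 * b7) + (b0 * a5 + a4 * b1 + beta * (a6 * - b3 + b2 * a7)))
   (a0 * b6 + alpha * (b7 * - - a1) + (b4 * - a2 + alpha * (- a3 * b5)) + (b0 * a6 + alpha * (a7 * - b1) + (a4 * b2 + alpha * (b3 * a5))))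
   (a0 * b7 + b6 * - - a1 + (b4 * - a3 + - a2 * b5) + (b0 * a7 + a6 * - b1 + (a4 * b3 + b2 * a5))).
Proof. by rewrite mkE. Qed.

Lemma addE a0 a1 a2 a3 a4 a5 a6 a7 b0 b1 b2 b3 b4 b5 b6 b7 :
  mk a0 a1 a2 a3 a4 a5 a6 a7 + mk b0 b1 b2 b3 b4 b5 b6 b7 =
  mk (a0 + b0) (a1 + b1) (a2 + b2) (a3 + b3)
     (a4 + b4) (a5 + b5) (a6 + b6) (a7 + b7).
Proof. by rewrite mkE. Qed.

Lemma oppE a0 a1 a2 a3 a4 a5 a6 a7 :
  - mk a0 a1 a2 a3 a4 a5 a6 a7 =
  mk (- a0) (- a1) (- a2) (- a3) (- a4) (- a5) (- a6) (- a7).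
Proof. by rewrite mkE. Qed.

Lemma scaleE k a0 a1 a2 a3 a4 a5 a6 a7 :
  k *: mk a0 a1 a2 a3 a4 a5 a6 a7 =
  mk (k * a0) (k * a1) (k * a2) (k * a3) (k * a4) (k * a5) (k * a6) (k * a7).
Proof. by rewrite mkE. Qed.

Lemma zeroE : (0 : O) = mk 0 0 0 0 0 0 0 0. Proof. by rewrite mkE. Qed.
Lemma oneE : one = mk 1 0 0 0 0 0 0 0. Proof. by rewrite mkE. Qed.

Lemma conjE a0 a1 a2 a3 a4 a5 a6 a7 :
  oconj (mk a0 a1 a2 a3 a4 a5 a6 a7) =
  mk a0 (- a1) (- a2) (- a3) (- a4) (- a5) (- a6) (- a7).
Proof. by rewrite mkE. Qed.

(* The real part of an octonion, i.e. its coordinate along 1. *)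
Definition re (x : O) : F^o := x.1.1.1.

Lemma reE a0 a1 a2 a3 a4 a5 a6 a7 : re (mk a0 a1 a2 a3 a4 a5 a6 a7) = a0.
Proof. by rewrite mkE. Qed.

Fact re_is_linear : linear re. Proof. by []. Qed.
HB.instance Definition _ := GRing.isLinear.Build F O F^o *:%R re re_is_linear.

Lemma re_one : re one = 1. Proof. by rewrite oneE reE. Qed.

Local Ltac coords x :=
  rewrite [x]mkK;
  move: (x.1.1.1) (x.1.1.2) (x.1.2.1) (x.1.2.2)
        (x.2.1.1) (x.2.1.2) (x.2.2.1) (x.2.2.2) => ? ? ? ? ? ? ? ?.
Local Ltac crunch :=
  rewrite ?zeroE ?oneE !(omulE, addE, oppE, scaleE, conjE) ?reE;
  apply: mk_eq; ring.

Lemma omulDl (x y z : O) : om (x + y) z = om x z + om y z.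
Proof. coords x; coords y; coords z; crunch. Qed.
Lemma omulDr (x y z : O) : om z (x + y) = om z x + om z y.
Proof. coords x; coords y; coords z; crunch. Qed.
Lemma omulZl k (x z : O) : om (k *: x) z = k *: om x z.
Proof. coords x; coords z; crunch. Qed.
Lemma omulZr k (x z : O) : om z (k *: x) = k *: om z x.
Proof. coords x; coords z; crunch. Qed.
Lemma omulNl (x z : O) : om (- x) z = - om x z.
Proof. coords x; coords z; crunch. Qed.
Lemma omulNr (x z : O) : om z (- x) = - om z x.
Proof. coords x; coords z; crunch. Qed.

Lemma om1l (x : O) : om one x = x. Proof. coords x; crunch. Qed.
Lemma om1r (x : O) : om x one = x. Proof. coords x; crunch. Qed.

Lemma om_left_alt (x y : O) : om x (om x y) = om (om x x) y.
Proof. coords x; coords y; crunch. Qed.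
Lemma om_right_alt (x y : O) : om (om y x) x = om y (om x x).
Proof. coords x; coords y; crunch. Qed.

(* The associator vanishes on (u, v, uv): the one triple of generators of
   H(u, v) that alternativity alone does not handle. *)
Lemma om_assoc_uv_uv (x y : O) : om (om x y) (om x y) = om x (om y (om x y)).
Proof. coords x; coords y; crunch. Qed.

Lemma om_quadratic (x : O) :
  om x x = (re x *+ 2) *: x + (re (om x x) - re x *+ 2 * re x) *: one.
Proof. coords x; crunch. Qed.

Lemma oconj_re (x : O) : oconj x = (re x *+ 2) *: one - x.
Proof. coords x; crunch. Qed.

Lemma om_diff_sq c (x : O) :
  om (c *: one - x) (c *: one + x) = c ^+ 2 *: one - om x x.
Proof. coords x; crunch. Qed.

End Coordinates.

Section Alternative.
Variables (F : fieldType) (alpha beta gamma : F).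
Local Notation O := (Cayley F).
Local Notation om := (omul alpha beta gamma).
Local Notation one := (oone F).

(* The associator (x, y, z) = (xy)z - x(yz); locked, so that unification
   never unfolds it into coordinates. *)
Definition assoc_def (x y z : O) : O := om (om x y) z - om x (om y z).
Definition assoc := locked assoc_def.
Lemma assocE x y z : assoc x y z = om (om x y) z - om x (om y z).
Proof. by rewrite /assoc -lock. Qed.

Lemma assocDl x x' y z : assoc (x + x') y z = assoc x y z + assoc x' y z.
Proof. by rewrite !assocE !(omulDl, omulDr) opprD addrACA. Qed.
Lemma assocDm x y y' z : assoc x (y + y') z = assoc x y z + assoc x y' z.
Proof. by rewrite !assocE !(omulDl, omulDr) opprD addrACA. Qed.
Lemma assocDr x y z z' : assoc x y (z + z') = assoc x y z + assoc x y z'.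
Proof. by rewrite !assocE !(omulDl, omulDr) opprD addrACA. Qed.
Lemma assocZl k x y z : assoc (k *: x) y z = k *: assoc x y z.
Proof. by rewrite !assocE !(omulZl, omulZr) scalerBr. Qed.
Lemma assocZm k x y z : assoc x (k *: y) z = k *: assoc x y z.
Proof. by rewrite !assocE !(omulZl, omulZr) scalerBr. Qed.
Lemma assocZr k x y z : assoc x y (k *: z) = k *: assoc x y z.
Proof. by rewrite !assocE !(omulZl, omulZr) scalerBr. Qed.

Lemma assoc1l y z : assoc one y z = 0.
Proof. by rewrite !assocE !om1l subrr. Qed.
Lemma assoc1m x z : assoc x one z = 0.
Proof. by rewrite !assocE om1l om1r subrr. Qed.
Lemma assoc1r x y : assoc x y one = 0.
Proof. by rewrite !assocE !om1r subrr. Qed.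

Lemma assoc_xxy x y : assoc x x y = 0.
Proof. by rewrite !assocE om_left_alt subrr. Qed.
Lemma assoc_yxx x y : assoc y x x = 0.
Proof. by rewrite !assocE om_right_alt subrr. Qed.

Lemma assoc_swap12 x y z : assoc y x z = - assoc x y z.
Proof.
apply/eqP; rewrite -addr_eq0; apply/eqP.
move: (assoc_xxy (x + y) z).
by rewrite assocDl !assocDm !assoc_xxy add0r addr0 addrC.
Qed.

Lemma assoc_swap23 x y z : assoc x z y = - assoc x y z.
Proof.
apply/eqP; rewrite -addr_eq0; apply/eqP.
move: (assoc_yxx (y + z) x).
by rewrite assocDm !assocDr !assoc_yxx add0r addr0 addrC.
Qed.

Lemma assoc_xyx x y : assoc x y x = 0.
Proof. by rewrite assoc_swap23 assoc_xxy oppr0. Qed.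

Lemma assoc_uv_perm u v (w := om u v) :
  [/\ assoc u v w = 0, assoc v u w = 0, assoc u w v = 0 &
      [/\ assoc w u v = 0, assoc v w u = 0 & assoc w v u = 0]].
Proof.
have uvw : assoc u v w = 0 by rewrite !assocE om_assoc_uv_uv subrr.
have uwv : assoc u w v = 0 by rewrite assoc_swap23 uvw oppr0.
have vuw : assoc v u w = 0 by rewrite assoc_swap12 uvw oppr0.
have vwu : assoc v w u = 0 by rewrite assoc_swap23 vuw oppr0.
by do 2?split=> //; rewrite assoc_swap12 ?uwv ?vwu oppr0.
Qed.

Lemma re_scalar c : re (c *: one) = c.
Proof. by rewrite linearZ /= re_one -[c%:A]/(c * 1) mulr1. Qed.

Lemma scalar_re (x : O) c : x = c *: one -> x = re x *: one.
Proof. by move=> ->; rewrite re_scalar. Qed.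

Lemma sq_im (x : O) : re x = 0 -> om x x = re (om x x) *: one.
Proof. by move=> hx; rewrite {1}om_quadratic hx mul0rn scale0r add0r mul0r subr0. Qed.

Lemma anticomm u v : re u = 0 -> re v = 0 ->
  om u v + om v u = re (om u v + om v u) *: one.
Proof.
move=> hu hv; have huv : re (u + v) = 0 by rewrite raddfD /= hu hv addr0.
apply: (scalar_re (c := re (om (u + v) (u + v)) - re (om u u) - re (om v v))).
rewrite !scalerBl -(sq_im huv) -(sq_im hu) -(sq_im hv) omulDl !omulDr.
by rewrite [in X in _ = X]addrA (addrAC _ (- om u u)) addrK addrAC [om u u + _]addrC addrK.
Qed.

End Alternative.

Section Quaternion.
Variables (F : fieldType) (alpha beta gamma : F).
Local Notation O := (Cayley F).
Local Notation om := (omul alpha beta gamma).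
Local Notation one := (oone F).
Local Notation assoc := (assoc alpha beta gamma).

Definition quat (u v : O) : {vspace O} := <<[:: om u v; v; u; one]>>%VS.

(* An alternating associator that vanishes on (u, v, w) in every order
   vanishes on all triples drawn from 1, u, v, w. *)
Lemma assoc_quat_gens (u v x y z : O) (X := [:: om u v; v; u; one]) :
  x \in X -> y \in X -> z \in X -> assoc x y z = 0.
Proof.
have [h1 h2 h3 [h4 h5 h6]] := assoc_uv_perm alpha beta gamma u v.
rewrite /X; move: (om u v) h1 h2 h3 h4 h5 h6 => w h1 h2 h3 h4 h5 h6.
rewrite !inE => /or4P[]/eqP-> /or4P[]/eqP-> /or4P[]/eqP->;
  by rewrite ?(assoc1l, assoc1m, assoc1r, assoc_xxy, assoc_yxx, assoc_xyx).
Qed.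

Lemma quat_assoc (u v x y z : O) :
  x \in quat u v -> y \in quat u v -> z \in quat u v -> assoc x y z = 0.
Proof.
move=> xH yH zH; apply/eqP; rewrite -memv0; move: x xH.
apply: span_map_sub => [x x'|k x|x Xx]; rewrite ?assocDl ?assocZl //.
move: y yH; apply: span_map_sub => [y y'|k y|y Xy]; rewrite ?assocDm ?assocZm //.
move: z zH; apply: span_map_sub => [z z'|k z|z Xz]; rewrite ?assocDr ?assocZr //.
by rewrite (assoc_quat_gens Xx Xy Xz) mem0v.
Qed.

Section Table.
Variables (u v : O) (s t k : F).
Hypotheses (uu : om u u = s *: one) (vv : om v v = t *: one)
  (uv_vu : om u v + om v u = k *: one).

Lemma mul_uv_anti : om u v = k *: one - om v u.
Proof. by rewrite -uv_vu addrK. Qed.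

Lemma mul_vu : om v u = k *: one - om u v.
Proof. by rewrite -uv_vu addrC addKr. Qed.

Lemma mul_u_uv : om u (om u v) = s *: v.
Proof. by rewrite om_left_alt uu omulZl om1l. Qed.

Lemma mul_uv_v : om (om u v) v = t *: u.
Proof. by rewrite om_right_alt vv omulZr om1r. Qed.

Lemma mul_v_uv : om v (om u v) = k *: v - t *: u.
Proof. by rewrite mul_uv_anti omulDr omulNr omulZr om1r om_left_alt vv omulZl om1l. Qed.

Lemma mul_uv_u : om (om u v) u = k *: u - s *: v.
Proof. by rewrite mul_uv_anti omulDl omulNl omulZl om1l om_right_alt uu omulZr om1r. Qed.

Lemma quat_mul_closed x y :
  x \in quat u v -> y \in quat u v -> om x y \in quat u v.
Proof.
have [wH vH uH oneH] : [/\ om u v \in quat u v, v \in quat u v,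
    u \in quat u v & one \in quat u v] by split; apply: memv_span; rewrite !inE eqxx ?orbT.
have wwH : om (om u v) (om u v) \in quat u v.
  by rewrite om_quadratic memvD ?memvZ.
move=> xH yH; move: x xH.
apply: span_map_sub => [x x'|c x|x Xx]; rewrite ?omulDl ?omulZl //.
move: y yH; apply: span_map_sub => [y y'|c y|y Xy]; rewrite ?omulDr ?omulZr //.
move: Xx Xy; rewrite !inE => /or4P[]/eqP-> /or4P[]/eqP->;
  rewrite ?om1l ?om1r ?uu ?vv ?mul_vu ?mul_u_uv ?mul_uv_v ?mul_v_uv ?mul_uv_u //;
  by do ?[apply: memvB | apply: memvD | apply: memvZ].
Qed.

End Table.

Lemma quat_sub_subalg (H : {vspace O}) u v :
  is_subalgebra alpha beta gamma H -> u \in H -> v \in H -> (quat u v <= H)%VS.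
Proof.
move=> [oneH mulH] uH vH; apply/span_subvP => x.
by rewrite !inE => /or4P[]/eqP->; rewrite ?mulH.
Qed.

End Quaternion.

Section Division.
Variables (F : fieldType) (alpha beta gamma : F).
Local Notation O := (Cayley F).
Local Notation om := (omul alpha beta gamma).
Local Notation one := (oone F).

Lemma one_neq0 : one != 0.
Proof. by apply: contra_neq (oner_neq0 F) => one0; rewrite -(re_one F) one0 raddf0. Qed.

Lemma im_notin_scalars (x : O) : re x = 0 -> x != 0 -> x \notin <[one]>%VS.
Proof.
move=> hx; apply: contra => /vlineP[c ex]; apply/eqP.
by move: hx; rewrite ex re_scalar => ->; rewrite scale0r.
Qed.

Hypothesis div : cayley_division alpha beta gamma.

(* Writing uv = a v + r with r in F1 + Fu and multiplying by u on the left
   gives (u^2 - a^2) v = a r + u r, so either v lies in F1 + Fu, or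
   (a - u)(a + u) = a^2 - u^2 = 0 and u = +-a is a scalar. *)
Lemma mul_uv_notin (u v : O) : re u = 0 ->
  u \notin <[one]>%VS -> v \notin <<[:: u; one]>>%VS ->
  om u v \notin <<[:: v; u; one]>>%VS.
Proof.
move=> hu uN1 vN; apply/negP; rewrite span_cons => /memv_addP[_ /vlineP[a ->] [r rS ew]].
have uS : u \in <<[:: u; one]>>%VS by rewrite memv_span ?mem_head.
have oneS : one \in <<[:: u; one]>>%VS by rewrite memv_span // !inE eqxx orbT.
have urS : om u r \in <<[:: u; one]>>%VS.
  apply: (span_map_sub _ _ _ rS) => [x y|c x|x]; rewrite ?omulDr ?omulZr //.
  by rewrite !inE => /orP[]/eqP->; rewrite ?om1r // (sq_im alpha beta gamma hu) memvZ.
have E : re (om u u) *: v = a ^+ 2 *: v + (a *: r + om u r).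
  rewrite -(mul_u_uv v (sq_im alpha beta gamma hu)) ew omulDr omulZr ew.
  by rewrite scalerDr scalerA -expr2 addrA.
have [a2|a2] := eqVneq (re (om u u) - a ^+ 2) 0.
  have : om (a *: one - u) (a *: one + u) = 0.
    by rewrite om_diff_sq (sq_im alpha beta gamma hu) -scalerBl -opprB a2 oppr0 scale0r.
  case/div => /eqP; rewrite ?subr_eq0 ?addr_eq0 => /eqP ua; move: uN1.
    by rewrite -ua memvZ ?memv_line.
  by rewrite -[u]opprK -ua -scaleNr memvZ ?memv_line.
move: vN; rewrite -(scalerK a2 v) scalerBl E [a ^+ 2 *: v + _]addrC addrK.
by rewrite memvZ // memvD // memvZ.
Qed.

Lemma quat_free (u v : O) : re u = 0 -> re v = 0 ->
  free [:: v; u] -> free [:: om u v; v; u; one].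
Proof.
move=> hu hv; rewrite free_cons span_seq1 seq1_free => /andP[vNu u0].
have uN1 := im_notin_scalars hu u0.
have vN : v \notin <<[:: u; one]>>%VS.
  apply: contra vNu; rewrite span_cons span_seq1.
  case/memv_addP=> _ /vlineP[b ->] [_ /vlineP[c ->] ev].
  move: hv; rewrite ev raddfD /= linearZ /= hu re_scalar scaler0 add0r => c0.
  by rewrite c0 scale0r addr0 memvZ ?memv_line.
rewrite !free_cons span_nil memv0 nil_free one_neq0 mul_uv_notin ?span_seq1 //.
by rewrite vN uN1.
Qed.

End Division.

Section Design.
Variables (F : fieldType) (alpha beta gamma : F).
Local Notation O := (Cayley F).
Local Notation om := (omul alpha beta gamma).
Local Notation one := (oone F).

Definition imV : {vspace O} := lker (linfun (@re F)).

Lemma mem_imV x : (x \in imV) = (re x == 0).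
Proof. by rewrite memv_ker lfunE. Qed.

Lemma dim_cap_imV (U : {vspace O}) : one \in U -> \dim (U :&: imV) = (\dim U).-1.
Proof.
move=> oneU; rewrite -(limg_ker_dim (linfun (@re F)) U).
suff -> : \dim (linfun (@re F) @: U) = 1%N by rewrite addn1.
apply/eqP; rewrite eqn_leq -{1}[1%N](@dimvf _ F^o) dimvS ?subvf //= lt0n dimv_eq0.
apply: contraTneq (memv_img (linfun (@re F)) oneU) => ->.
by rewrite memv0 lfunE /= re_one oner_eq0.
Qed.

Lemma dim_imV : \dim imV = 7%N.
Proof. by rewrite -[imV]capfv dim_cap_imV ?memvf // dimvf. Qed.

Hypotheses (two : 2%:R != 0 :> F) (div : cayley_division alpha beta gamma).

Lemma oconj_im (x : O) : (oconj x == - x) = (x \in imV).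
Proof.
rewrite mem_imV oconj_re subr_eq addNr scaler_eq0 (negbTE (one_neq0 F)) orbF.
by rewrite -mulr_natr mulf_eq0 (negbTE two) orbF.
Qed.

Lemma im_cap (H B : {vspace O}) :
  is_im H B -> B = (H :&: imV)%VS.
Proof. by move=> imB; apply/vspaceP => x; rewrite imB memv_cap oconj_im. Qed.

Lemma quat_frakB (u v : O) : re u = 0 -> re v = 0 -> free [:: v; u] ->
  in_frakB alpha beta gamma (quat alpha beta gamma u v :&: imV)%VS.
Proof.
move=> hu hv uv_free; exists (quat alpha beta gamma u v); split.
- split; first by rewrite memv_span // !inE eqxx !orbT.
  move=> x y; apply: (quat_mul_closed (sq_im _ _ _ hu) (sq_im _ _ _ hv)).
  exact: anticomm.
- move=> x y z xH yH zH; apply/eqP; rewrite -subr_eq0 -assocE.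
  by rewrite (quat_assoc xH yH zH).
- by apply/eqP; exact: quat_free.
- by move=> x; rewrite memv_cap oconj_im.
Qed.

End Design.

Theorem mainTheorem1 (F : fieldType) (alpha beta gamma : F) :
  (2%:R : F) != 0 ->
  alpha != 0 -> beta != 0 -> gamma != 0 ->
  cayley_division alpha beta gamma ->
  exists V : {vspace Cayley F},
    [/\ is_im fullv V,
        \dim V = 7%N,
        (forall B : {vspace Cayley F},
            in_frakB alpha beta gamma B -> \dim B = 3%N) &
        (forall U : {vspace Cayley F}, (U <= V)%VS -> \dim U = 2%N ->
           exists! B : {vspace Cayley F},
             in_frakB alpha beta gamma B /\ (U <= B)%VS)].
Proof.
move=> two _ _ _ div; exists (imV F); split.
- by move=> x; rewrite memvf oconj_im.
- exact: dim_imV.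
- by move=> B [H [[oneH _] _ dimH /(im_cap two)->]]; rewrite dim_cap_imV ?dimH.
move=> U UV /dim2_basis[v [u [defU uv_free]]].
have [uU vU] : u \in U /\ v \in U by rewrite defU !memv_span ?mem_head // !inE eqxx orbT.
have [hu hv] : re u = 0 /\ re v = 0 by split; apply/eqP; rewrite -mem_imV (subvP UV).
pose H := quat alpha beta gamma u v.
exists (H :&: imV F)%VS; split.
  split; first exact: quat_frakB.
  rewrite defU; apply/span_subvP => x; rewrite !inE memv_cap => /orP[]/eqP->;
    by rewrite (subvP UV) ?memv_span // !inE eqxx ?orbT.
move=> B [[H' [subH' _ dimH' imB]] UB]; rewrite (im_cap two imB).
have inH' x : x \in U -> x \in H' by move=> /(subvP UB); rewrite imB => /andP[].
suff -> : H' = H by [].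
apply/eqP; rewrite eq_sym eqEdim quat_sub_subalg ?inH' // dimH'.
by have /eqP -> := quat_free div hu hv uv_free.
Qed.
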